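(* Let $P$ be a quasiconsistent policy over a DTD $D$. Then among all consistent total policies $Q$ over $D$ with $P\sqsubseteq Q$ there is a unique one, denoted $\widehat P$, such that $\widehat P\le Q$ for every consistent total policy $Q$ with $P\sqsubseteq Q$.
   Context: Let $\mathcal L$ be an infinite set of labels and $\mathsf{str}\notin\mathcal L$ a special symbol. A DTD is a triple $D=(Ele,Rg,rt)$ where $Ele\subseteq\mathcal L$ is finite, $rt\in Ele$ is the root type, and for each $A\in Ele$, $Rg(A)$ is one of: $\mathsf{str}$, $\epsilon$, $B_1,\dots,B_n$ (concatenation), $B_1+\dots+B_n$ (disjunction), or $B_1^*$ (Kleene star), where the $B_i\in Ele$ are pairwise distinct and are called subelement types of $A$. DTDs are non-recursive: the directed graph on $Ele$ with an edge $A\to B$ whenever $B$ is a subelement type of $A$ is acyclic. $\le_D$ denotes the reflexive–transitive closure of the subelement relation. We assume every element type is reachable from the root: $rt\le_D A$ for all $A\in Ele$. An XML tree is $t=(N_t,E_t,\lambda_t,r_t,v_t)$: a finite rooted unordered tree with node set $N_t$, parent–child edge set $E_t$, root $r_t$, labelling $\lambda_t:N_t\to\mathcal L\cup\{\mathsf{str}\}$, and a function $v_t$ assigning a string to each node labelled $\mathsf{str}$. The tree $t$ conforms to $D$ at $A\in Ele$ if $\lambda_t(r_t)=A$, every node is labelled by an element of $Ele\cup\{\mathsf{str}\}$, every node labelled $B\in Ele$ has children whose labels, listed in some order, form a word of the language of the regular expression $Rg(B)$ (with $Rg(B)=\mathsf{str}$ meaning a single child labelled $\mathsf{str}$ and $\epsilon$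 meaning no children), and every node labelled $\mathsf{str}$ is a leaf with a defined string value. $I_D(A)$ is the set of trees conforming to $D$ at $A$, and $I_D=I_D(rt)$. Trees $t_1,t_2$ are isomorphic, $t_1\equiv t_2$, if there is a bijection $N_{t_1}\to N_{t_2}$ preserving root, edges, labels and string values. Atomic updates on a tree $t$: $\mathsf{insert}(n,t')$ adds the tree $t'$ with its root as a new child of $n$; $\mathsf{delete}(n)$ removes $n$ and all its descendants; $\mathsf{replace}(n,t')$ removes the subtree rooted at $n$ and attaches $t'$ (by its root) as a child of the former parent of $n$; $\mathsf{replace}(n,s)$, for a string $s$, sets the string value of $n$ to $s$. An update is valid on $t$ if $n\in N_t$ and the tree $t'$ (if present) has node set disjoint from $N_t$; $[\![op]\!](t)$ denotes the result. For a sequence, $[\![op_1;\dots;op_k]\!](t)=[\![op_k]\!](\cdots[\![op_1]\!](t)\cdots)$, and the sequence is valid on $t$ if each $op_i$ is valid on the result of $op_1;\dots;op_{i-1}$. Update access types (UATs) are expressions $(A,\mathsf{insert}(B))$, $(A,\mathsf{delete}(B))$, $(A,\mathsf{replace}(B,B'))$ with $B\neq B'$, and $(A,\mathsf{replace}(\mathsf{str},\mathsf{str}))$, with $A\in Ele$; $A$ is the element type of the UAT. Such a UAT is valid for $D$ iff, respectively: $Rg(A)=B^*$; $Rg(A)=B^*$; $Rg(A)=B_1+\dots+B_n$ with $B,B'\in\{B_1,\dots,B_n\}$, $B\neq B'$; $Rg(A)=\mathsf{str}$. $\mathrm{valid}(D)$ is the set of UATs valid for $D$. An atomic update matches a UAT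 on $t$ as follows: $\mathsf{insert}(n,t')$ matches $(A,\mathsf{insert}(B))$ if $\lambda_t(n)=A$ and $t'\in I_D(B)$; $\mathsf{delete}(n)$ matches $(A,\mathsf{delete}(B))$ if $\lambda_t(n)=B$ and the parent of $n$ is labelled $A$; $\mathsf{replace}(n,t')$ matches $(A,\mathsf{replace}(B,B'))$ if $\lambda_t(n)=B$, the parent of $n$ is labelled $A$, $t'\in I_D(B')$ and $B\neq B'$; $\mathsf{replace}(n,s)$ matches $(A,\mathsf{replace}(\mathsf{str},\mathsf{str}))$ if $\lambda_t(n)=\mathsf{str}$ and the parent of $n$ is labelled $A$. For a set $S$ of UATs, $[\![S]\!]_t$ is the set of atomic updates matching some element of $S$ on $t$. A sequence $op_1;\dots;op_k$ is allowed on $t$ by $S$ if it is valid on $t$ and $op_i\in[\![S]\!]_{t_{i-1}}$ for all $i$, where $t_0=t$ and $t_i=[\![op_i]\!](t_{i-1})$. A policy over $D$ is a pair $P=(\mathcal A,\mathcal F)$ with $\mathcal A,\mathcal F\subseteq\mathrm{valid}(D)$ and $\mathcal A\cap\mathcal F=\emptyset$ (allowed and forbidden UATs); it is total if $\mathcal A\cup\mathcal F=\mathrm{valid}(D)$ and partial otherwise. $P$ is consistent if there exist no $t\in I_D$, no sequence $op_1;\dots;op_k$ ($k\ge1$) allowed on $t$ by $\mathcal A$, and no $op_0\in[\![\mathcal F]\!]_t$ valid on $t$ and non-trivial (i.e. $[\![op_0]\!](t)\not\equiv t$) such that $[\![op_1;\dots;op_k]\!](t)\equiv[\![op_0]\!](t)$.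 Writing $P=(\mathcal A_P,\mathcal F_P)$, the information ordering is $P\sqsubseteq Q$ iff $\mathcal A_P\subseteq\mathcal A_Q$ and $\mathcal F_P\subseteq\mathcal F_Q$; then $Q$ is said to extend $P$. A policy $P$ is quasiconsistent if it has a consistent total extension. The privilege ordering on total policies is $P\le Q$ iff $\mathcal A_P\subseteq\mathcal A_Q$. *)

From Stdlib Require Import List String Permutation Relations.
Import ListNotations.

(* The infinite set of labels L is modelled by nat; string values by [string]. *)
Definition label := nat.

Inductive rg : Type :=
| RStr
| REps
| RCat  (bs : list label)
| RDisj (bs : list label)
| RStar (b : label).

Record dtd : Type := mkDTD { ele : list label; Rg : label -> rg; rt : label }.

Definition subs (r : rg) : list label :=
  match r with
  | RCat bs | RDisj bs => bs
  | RStar b => [b]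
  | _ => []
  end.

Definition sub_rel (D : dtd) (A B : label) : Prop :=
  In A (ele D) /\ In B (subs (Rg D A)).

Definition nonempty_rhs (r : rg) : Prop :=
  match r with
  | RCat bs | RDisj bs => bs <> []
  | _ => True
  end.

Definition wf_dtd (D : dtd) : Prop :=
  In (rt D) (ele D) /\
  (forall A, In A (ele D) ->
     incl (subs (Rg D A)) (ele D) /\ NoDup (subs (Rg D A)) /\ nonempty_rhs (Rg D A)) /\
  (forall A, ~ clos_trans label (sub_rel D) A A) /\
  (forall A, In A (ele D) -> clos_refl_trans label (sub_rel D) (rt D) A).

(* a node label: an element label, or the special symbol str together with
   the string value v_t of that node *)
Inductive lbl : Type :=
| El (a : label)
| Str (s : string).

(* Node identifier, label, children (order of the list is irrelevant). *)
Inductive xt : Type :=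
| Node (id : nat) (l : lbl) (kids : list xt).

Definition root_id (t : xt) : nat := match t with Node i _ _ => i end.
Definition root_lab (t : xt) : lbl := match t with Node _ l _ => l end.

Fixpoint nodes (t : xt) : list (nat * lbl) :=
  match t with Node i l ks => (i, l) :: flat_map nodes ks end.

Definition ids (t : xt) : list nat := map fst (nodes t).

Fixpoint edges (t : xt) : list (nat * nat) :=
  match t with
  | Node i _ ks => map (fun k => (i, root_id k)) ks ++ flat_map edges ks
  end.

Fixpoint cinfo (t : xt) : list (nat * lbl * list lbl) :=
  match t with
  | Node i l ks => (i, l, map root_lab ks) :: flat_map cinfo ks
  end.

Definition wf_tree (t : xt) : Prop := NoDup (ids t).

Definition iso (t1 t2 : xt) : Prop :=
  exists f : nat -> nat,
    (forall n, In n (ids t1) -> In (f n) (ids t2)) /\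
    (forall n m, In n (ids t1) -> In m (ids t1) -> f n = f m -> n = m) /\
    (forall m, In m (ids t2) -> exists n, In n (ids t1) /\ f n = m) /\
    f (root_id t1) = root_id t2 /\
    (forall n m, In n (ids t1) -> In m (ids t1) ->
       (In (n, m) (edges t1) <-> In (f n, f m) (edges t2))) /\
    (forall n l, In (n, l) (nodes t1) -> In (f n, l) (nodes t2)).

Definition in_lang (r : rg) (w : list lbl) : Prop :=
  match r with
  | RStr => exists s, w = [Str s]
  | REps => w = []
  | RCat bs => w = map El bs
  | RDisj bs => exists b, In b bs /\ w = [El b]
  | RStar b => Forall (fun x => x = El b) w
  end.

Definition I_D (D : dtd) (A : label) (t : xt) : Prop :=
  wf_tree t /\
  root_lab t = El A /\
  (forall i l w, In (i, l, w) (cinfo t) ->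
     match l with
     | El B => In B (ele D) /\ exists w', Permutation w w' /\ in_lang (Rg D B) w'
     | Str _ => w = []
     end).

Inductive op : Type :=
| Ins  (n : nat) (t' : xt)
| Del  (n : nat)
| RepT (n : nat) (t' : xt)
| RepS (n : nat) (s : string).

Fixpoint ins (n : nat) (t' : xt) (t : xt) : xt :=
  match t with
  | Node i l ks =>
      Node i l ((if Nat.eqb i n then [t'] else []) ++ map (ins n t') ks)
  end.

(* removes the subtrees rooted at non-root nodes with id n
   (deleting the root is never matched by any UAT) *)
Fixpoint del (n : nat) (t : xt) : xt :=
  match t with
  | Node i l ks =>
      Node i l (flat_map (fun k => if Nat.eqb (root_id k) n then [] else [del n k]) ks)
  end.

Fixpoint rept (n : nat) (t' : xt) (t : xt) : xt :=
  match t with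
  | Node i l ks => if Nat.eqb i n then t' else Node i l (map (rept n t') ks)
  end.

Fixpoint reps (n : nat) (s : string) (t : xt) : xt :=
  match t with
  | Node i l ks =>
      let l' := match l with
                | Str _ => if Nat.eqb i n then Str s else l
                | El a => El a
                end in
      Node i l' (map (reps n s) ks)
  end.

Definition apply_op (o : op) (t : xt) : xt :=
  match o with
  | Ins n t' => ins n t' t
  | Del n => del n t
  | RepT n t' => rept n t' t
  | RepS n s => reps n s t
  end.

Definition apply_seq (os : list op) (t : xt) : xt :=
  fold_left (fun t o => apply_op o t) os t.

Definition disjoint_ids (t1 t2 : xt) : Prop :=
  forall n, In n (ids t1) -> ~ In n (ids t2).

Definition valid_op (o : op) (t : xt) : Prop :=
  match o with
  | Ins n t' | RepT n t' => In n (ids t) /\ disjoint_ids t' t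
  | Del n | RepS n _ => In n (ids t)
  end.

Inductive uat : Type :=
| UIns  (A B : label)
| UDel  (A B : label)
| URep  (A B B' : label)
| URepS (A : label).

Definition valid_uat (D : dtd) (u : uat) : Prop :=
  match u with
  | UIns A B | UDel A B => In A (ele D) /\ Rg D A = RStar B
  | URep A B B' =>
      In A (ele D) /\ B <> B' /\
      exists bs, Rg D A = RDisj bs /\ In B bs /\ In B' bs
  | URepS A => In A (ele D) /\ Rg D A = RStr
  end.

Definition has_lab (t : xt) (n : nat) (l : lbl) : Prop := In (n, l) (nodes t).

Definition parent_labelled (t : xt) (n : nat) (A : label) : Prop :=
  exists p, In (p, n) (edges t) /\ has_lab t p (El A).

Definition matches (D : dtd) (t : xt) (o : op) (u : uat) : Prop :=
  match o, u with
  | Ins n t', UIns A B => has_lab t n (El A) /\ I_D D B t'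
  | Del n, UDel A B => has_lab t n (El B) /\ parent_labelled t n A
  | RepT n t', URep A B B' =>
      has_lab t n (El B) /\ parent_labelled t n A /\ I_D D B' t' /\ B <> B'
  | RepS n _, URepS A =>
      (exists s0, has_lab t n (Str s0)) /\ parent_labelled t n A
  | _, _ => False
  end.

Definition in_sem (D : dtd) (S : uat -> Prop) (t : xt) (o : op) : Prop :=
  exists u, S u /\ matches D t o u.

Fixpoint allowed (D : dtd) (S : uat -> Prop) (t : xt) (os : list op) : Prop :=
  match os with
  | [] => True
  | o :: os' => valid_op o t /\ in_sem D S t o /\ allowed D S (apply_op o t) os'
  end.

Record policy : Type := mkPolicy { pA : uat -> Prop; pF : uat -> Prop }.

Definition policy_over (D : dtd) (P : policy) : Prop :=
  (forall u, pA P u -> valid_uat D u) /\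
  (forall u, pF P u -> valid_uat D u) /\
  (forall u, pA P u -> pF P u -> False).

Definition total (D : dtd) (P : policy) : Prop :=
  forall u, valid_uat D u -> pA P u \/ pF P u.

Definition consistent (D : dtd) (P : policy) : Prop :=
  ~ exists (t : xt) (os : list op) (o0 : op),
      I_D D (rt D) t /\
      os <> [] /\
      allowed D (pA P) t os /\
      in_sem D (pF P) t o0 /\
      valid_op o0 t /\
      ~ iso (apply_op o0 t) t /\
      iso (apply_seq os t) (apply_op o0 t).

Definition info_le (P Q : policy) : Prop :=
  (forall u, pA P u -> pA Q u) /\ (forall u, pF P u -> pF Q u).

Definition priv_le (P Q : policy) : Prop :=
  forall u, pA P u -> pA Q u.

Definition consistent_total (D : dtd) (Q : policy) : Prop :=
  policy_over D Q /\ total D Q /\ consistent D Q.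

Definition quasiconsistent (D : dtd) (P : policy) : Prop :=
  exists Q, consistent_total D Q /\ info_le P Q.

Definition policy_eq (P Q : policy) : Prop :=
  (forall u, pA P u <-> pA Q u) /\ (forall u, pF P u <-> pF Q u).

From Stdlib Require Import Classical.

(* The least consistent total extension of P is the "meet" of all
   consistent total extensions Q of P: it allows exactly the UATs allowed by
   every such Q and forbids every other valid UAT.
   - Consistency is checked one forbidden UAT at a time, and only grows harder
     with more allowed UATs ([consistent_pointwise]); hence the meet of any
     nonempty family of consistent total policies is again consistent and
     total ([meet_consistent_total]), since each UAT it forbids is forbidden
     by some member whose allowed set contains the meet's.
   - The meet lies below every member for the privilege ordering, and it
     extends P when every member does ([meet_extends]).
   - A total policy is determined by its allowed set ([total_forbidden_iff]),
     so the privilege ordering is antisymmetric on total policies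
     ([priv_le_antisym]), which gives uniqueness.
   Quasiconsistency of P says precisely that the family is nonempty. *)

Lemma allowed_mono (D : dtd) (S1 S2 : uat -> Prop) :
  (forall u, S1 u -> S2 u) ->
  forall os t, allowed D S1 t os -> allowed D S2 t os.
Proof.
  intros HS os; induction os as [|o os IH]; simpl; intros t Hal; auto.
  destruct Hal as [Hv [[u [Hu Hm]] Hrest]].
  split; [exact Hv|]. split; [exists u; auto | apply IH; exact Hrest].
Qed.

Lemma consistent_pointwise (D : dtd) (R : policy) :
  (forall u, pF R u ->
     exists Q, consistent D Q /\ (forall v, pA R v -> pA Q v) /\ pF Q u) ->
  consistent D R.
Proof.
  intros Hwit [t [os [o0 [Ht [Hne [Hal [[u [HFu Hm]] Hrest]]]]]]].
  destruct (Hwit u HFu) as [Q [HQ [HAQ HFQ]]].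
  apply HQ. exists t, os, o0.
  split; [exact Ht|]. split; [exact Hne|].
  split; [exact (allowed_mono D _ _ HAQ os t Hal)|].
  split; [exists u; auto | exact Hrest].
Qed.

Lemma total_forbidden_iff (D : dtd) (Q : policy) (u : uat) :
  policy_over D Q -> total D Q ->
  (pF Q u <-> valid_uat D u /\ ~ pA Q u).
Proof.
  intros [_ [HFv Hdisj]] Htot. split.
  - intro HF. split; [exact (HFv u HF)|]. intro HA. exact (Hdisj u HA HF).
  - intros [Hv HnA]. destruct (Htot u Hv) as [HA|HF]; [contradiction|exact HF].
Qed.

Lemma priv_le_antisym (D : dtd) (Q1 Q2 : policy) :
  policy_over D Q1 -> total D Q1 -> policy_over D Q2 -> total D Q2 ->
  priv_le Q1 Q2 -> priv_le Q2 Q1 -> policy_eq Q1 Q2.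
Proof.
  intros Ho1 Ht1 Ho2 Ht2 H12 H21. split; intro u.
  - split; [apply H12 | apply H21].
  - rewrite (total_forbidden_iff D Q1 u Ho1 Ht1),
            (total_forbidden_iff D Q2 u Ho2 Ht2).
    split; intros [Hv HnA]; split; auto.
Qed.

Section Meet.

Variable D : dtd.
Variable fam : policy -> Prop.

Definition meet_allowed (u : uat) : Prop := forall Q, fam Q -> pA Q u.

Definition meet_policy : policy :=
  mkPolicy meet_allowed (fun u => valid_uat D u /\ ~ meet_allowed u).

Lemma meet_priv_le (Q : policy) : fam Q -> priv_le meet_policy Q.
Proof. intros HQ u Hu. exact (Hu Q HQ). Qed.

Hypothesis fam_ct : forall Q, fam Q -> consistent_total D Q.
Hypothesis fam_nonempty : exists Q, fam Q.

Lemma meet_consistent_total : consistent_total D meet_policy.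
Proof.
  destruct fam_nonempty as [Q0 HQ0].
  destruct (fam_ct Q0 HQ0) as [[HA0 _] _].
  split; [|split].
  - split; [|split].
    + intros u Hu. exact (HA0 u (Hu Q0 HQ0)).
    + intros u [Hv _]. exact Hv.
    + intros u HA [_ HnA]. exact (HnA HA).
  - intros u Hv. destruct (classic (meet_allowed u)); [left|right]; simpl; auto.
  - apply consistent_pointwise. intros u [Hv HnA].
    (* some member does not allow u, hence forbids it by totality *)
    apply not_all_ex_not in HnA as [Q HQ].
    apply imply_to_and in HQ as [HfQ HnAQ].
    destruct (fam_ct Q HfQ) as [HoQ [HtQ HcQ]].
    exists Q. split; [exact HcQ|]. split.
    + intros v Hv'. exact (Hv' Q HfQ).
    + apply (total_forbidden_iff D Q u HoQ HtQ). auto.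
Qed.

Lemma meet_extends (P : policy) :
  policy_over D P -> (forall Q, fam Q -> info_le P Q) -> info_le P meet_policy.
Proof.
  intros [_ [HFv _]] Hext. destruct fam_nonempty as [Q0 HQ0]. split.
  - intros u Hu Q HQ. exact (proj1 (Hext Q HQ) u Hu).
  - intros u Hu. split; [exact (HFv u Hu)|]. intro HA.
    destruct (fam_ct Q0 HQ0) as [[_ [_ Hdisj]] _].
    exact (Hdisj u (HA Q0 HQ0) (proj2 (Hext Q0 HQ0) u Hu)).
Qed.

End Meet.

Theorem proposition2 (D : dtd) (P : policy) :
  wf_dtd D ->
  policy_over D P ->
  quasiconsistent D P ->
  exists Phat : policy,
    (consistent_total D Phat /\ info_le P Phat /\
     (forall Q, consistent_total D Q -> info_le P Q -> priv_le Phat Q)) /\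
    (forall Q', (consistent_total D Q' /\ info_le P Q' /\
                 (forall Q, consistent_total D Q -> info_le P Q -> priv_le Q' Q)) ->
                policy_eq Q' Phat).
Proof.
  intros _ HP Hqc.
  set (ext := fun Q => consistent_total D Q /\ info_le P Q).
  assert (Hct : forall Q, ext Q -> consistent_total D Q) by (intros Q []; auto).
  assert (Hne : exists Q, ext Q) by exact Hqc.
  pose proof (meet_consistent_total D ext Hct Hne) as Hmeet.
  pose proof (meet_extends D ext Hct Hne P HP (fun Q HQ => proj2 HQ)) as Hinfo.
  exists (meet_policy D ext).
  split; [split; [exact Hmeet | split; [exact Hinfo|]]|].
  - intros Q HQ HPQ. exact (meet_priv_le D ext Q (conj HQ HPQ)).
  - intros Q' [HQ' [HPQ' Hleast]].
    destruct HQ' as [Ho' [Ht' Hc']], Hmeet as [Ho [Ht Hc]].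
    apply (priv_le_antisym D); auto.
    + exact (Hleast _ (conj Ho (conj Ht Hc)) Hinfo).
    + exact (meet_priv_le D ext Q' (conj (conj Ho' (conj Ht' Hc')) HPQ')).
Qed.
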